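(* Let $q$ be a power of $2$. For $i=1,\dots,k$, let $b_i,\delta\in\mathbb{F}_q^*$ and let $s_i$ be positive integers. Then the polynomial $$P(x)=\sum_{i=1}^k b_i(x^q+x+\delta)^{s_i}+x$$ is an involution over $\mathbb{F}_{q^2}$.
   Context: A polynomial $P$ is an involution over $\mathbb{F}_{q^2}$ if it is a permutation polynomial of $\mathbb{F}_{q^2}$ equal to its own compositional inverse, i.e. $P(P(c))=c$ for all $c\in\mathbb{F}_{q^2}$. *)

From HB Require Import structures.
From mathcomp Require Import all_boot all_order all_algebra all_field.
Set Implicit Arguments. Unset Strict Implicit. Unset Printing Implicit Defensive.
Import GRing.Theory.
Local Open Scope ring_scope.

Definition is_involution (F : finFieldType) (p : {poly F}) : Prop :=
  bijective (fun c : F => p.[c]) /\ forall c : F, p.[p.[c]] = c.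

Definition Ppoly (F : finFieldType) (q k : nat) (b : 'I_k -> F) (s : 'I_k -> nat)
  (delta : F) : {poly F} :=
  \sum_(i < k) b i *: ('X^q + 'X + delta%:P) ^+ (s i) + 'X.

From HB Require Import structures.
From mathcomp Require Import all_boot all_order all_algebra all_field.
Import GRing.Theory.
Local Open Scope ring_scope.

(* Write P(c) = G(T(c) + delta) + c with G(t) = sum_i b_i t^(s_i) and
   T(c) = c^q + c.  As x |-> x^q is an additive involution of F_{q^2}, the
   value t = T(c) + delta lies in F_q, hence so does G(t), and therefore
   T(G(t)) = 2 G(t) = 0.  Thus T(P(c)) = T(c), i.e. P(c) and c produce the
   same t, and P(P(c)) = G(t) + G(t) + c = c. *)

Lemma involutive_addr_invariant (R : nzRingType) (g h : R -> R) :
  2%N \in [pchar R] -> (forall c, h (g (h c) + c) = h c) ->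
  involutive (fun c => g (h c) + c).
Proof. by move=> pchar2 hK c; rewrite hK addrA addrr_pchar2 ?add0r. Qed.

Section FrobeniusTrace.

Variables (R : comNzRingType) (q : nat).
Hypotheses (pchar2 : 2%N \in [pchar R]) (q_pchar_nat : [pchar R].-nat q)
  (exprqK : forall x : R, x ^+ q ^+ q = x).

Lemma exprqD (x y : R) : (x + y) ^+ q = x ^+ q + y ^+ q.
Proof. exact: exprDn_pchar. Qed.

Lemma frob_trace_fixed (c : R) : (c ^+ q + c) ^+ q = c ^+ q + c.
Proof. by rewrite exprqD exprqK addrC. Qed.

Lemma frob_fixed_sum_mul_exp (I : finType) (b : I -> R) (s : I -> nat) (t : R) :
  (forall i, b i ^+ q = b i) -> t ^+ q = t ->
  (\sum_i b i * t ^+ s i) ^+ q = \sum_i b i * t ^+ s i.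
Proof.
move=> bq tq; apply: (big_ind (fun z : R => z ^+ q = z)).
- by rewrite expr0n eqn0Ngt; case/andP: q_pchar_nat => ->.
- by move=> x y xq yq; rewrite exprqD xq yq.
- by move=> i _; rewrite exprMn bq exprAC tq.
Qed.

Lemma frob_trace_shift_involutive (g : R -> R) (delta : R) :
  (forall t, t ^+ q = t -> g t ^+ q = g t) -> delta ^+ q = delta ->
  involutive (fun c => g (c ^+ q + c + delta) + c).
Proof.
move=> gq deltaq; apply: involutive_addr_invariant => // c.
set t := c ^+ q + c + delta.
have tq : t ^+ q = t by rewrite exprqD frob_trace_fixed deltaq.
by rewrite exprqD gq // addrACA addrr_pchar2 // add0r.
Qed.

End FrobeniusTrace.

Lemma horner_Ppoly (F : finFieldType) (q k : nat) (b : 'I_k -> F)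
    (s : 'I_k -> nat) (delta c : F) :
  (Ppoly q b s delta).[c] = \sum_(i < k) b i * (c ^+ q + c + delta) ^+ s i + c.
Proof.
rewrite /Ppoly hornerD hornerX horner_sum; congr (_ + _).
by apply: eq_bigr => i _; rewrite hornerZ horner_exp !hornerD hornerXn hornerX hornerC.
Qed.

Theorem theorem3p2 (F : finFieldType) (q : nat)
  (hq2 : exists m : nat, q = (2 ^ m)%N)
  (hcard : #|F| = (q ^ 2)%N)
  (k : nat) (b : 'I_k -> F) (s : 'I_k -> nat) (delta : F)
  (hb : forall i, b i != 0 /\ b i ^+ q = b i)
  (hdelta : delta != 0 /\ delta ^+ q = delta)
  (hs : forall i, (0 < s i)%N) :
  is_involution (Ppoly q b s delta).
Proof.
case: hq2 => m qE.
have pchar2 : 2%N \in [pchar F].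
  by apply: (@card_finPcharP _ _ (m * 2)); rewrite // hcard qE expnM.
have q_pchar_nat : [pchar F].-nat q.
  by rewrite qE (eq_pnat _ (pcharf_eq pchar2)) pnatX pnat_id.
have exprqK (x : F) : x ^+ q ^+ q = x.
  by rewrite -exprM -[in RHS](expf_card x) hcard expnS expn1.
have Gq (t : F) : t ^+ q = t ->
    (\sum_(i < k) b i * t ^+ s i) ^+ q = \sum_(i < k) b i * t ^+ s i.
  by apply: frob_fixed_sum_mul_exp => // i; case: (hb i).
have Ginv := frob_trace_shift_involutive _ _ pchar2 q_pchar_nat exprqK
  (fun t => \sum_(i < k) b i * t ^+ s i) delta Gq hdelta.2.
have Pinv : involutive (fun c => (Ppoly q b s delta).[c]).
  by move=> c; rewrite !horner_Ppoly; exact: (Ginv c).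
by split; [exact: inv_bij | exact: Pinv].
Qed.
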